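(* Let $a,b,n,r$ be integers with $n\ge1$, $a,b\ge n$ and $1\le r\le n$. Let $J$ be a totally ordered finite set with a decomposition $J=J_1\sqcup J_2$, $|J_1|=a$, $|J_2|=b$. Then there is a family $\mathcal{F}$ of $r$-element subsets of $J$ with $|\mathcal{F}|=\binom nr$ such that: (1) for every $I\in\mathcal{F}$, $|I\cap J_1|=\lfloor r/2\rfloor$ (equivalently $|I\,\Delta\,J_1|\in\{a,a+1\}$); (2) for every field $K$, every $n$-dimensional $K$-vector space $W$, and every family $(w_i)_{i\in J}$ of elements of $W$ such that every $n$-element subfamily is a basis of $W$, the elements $w_I=w_{i_1}\wedge\cdots\wedge w_{i_r}$ ($I=\{i_1<\dots<i_r\}\in\mathcal{F}$) form a basis of $\bigwedge^rW$.
   Context: $I\,\Delta\,J_1$ denotes the symmetric difference $(I\cup J_1)\setminus(I\cap J_1)$. *)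

From HB Require Import structures.
From mathcomp Require Import all_boot all_order all_algebra.
Set Implicit Arguments. Unset Strict Implicit. Unset Printing Implicit Defensive.
Import GRing.Theory.
Local Open Scope ring_scope.

Definition minor (K : fieldType) (p d : nat) (A : 'M[K]_(p, d))
    (S : {set 'I_d}) : K :=
  match #|S| =P p with
  | ReflectT e => \det (colsub (fun k : 'I_p => enum_val (cast_ord (esym e) k)) A)
  | ReflectF _ => 0
  end.

(* Exterior algebra of W (dimension d := \dim W), modelled in
   coordinates w.r.t. the basis vbasis fullv of W:
   an element is a function {set 'I_d} -> K, coefficient of e_S
   (e_S = e_{s_1} /\ ... /\ e_{s_k}, s_1 < ... < s_k). *)
Definition ExtAlg (K : fieldType) (W : vectType K) :=
  {ffun {set 'I_(\dim (fullv : {vspace W}))} -> K^o}.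

Definition ext_basis_vec (K : fieldType) (W : vectType K)
    (S : {set 'I_(\dim (fullv : {vspace W}))}) : ExtAlg W :=
  [ffun T => (T == S)%:R].

Definition ExtPow (K : fieldType) (W : vectType K) (r : nat) : {vspace ExtAlg W} :=
  <<[seq ext_basis_vec T | T <- enum [set T : {set 'I_(\dim (fullv : {vspace W}))} | #|T| == r]]>>%VS.

Definition coords (K : fieldType) (W : vectType K) (w : W)
    : 'rV[K]_(\dim (fullv : {vspace W})) :=
  \row_i coord (vbasis fullv) i w.

(* w_I = w_{i_1} /\ ... /\ w_{i_k} for I = {i_1 < ... < i_k}: its
   coordinate on e_S is the minor on columns S of the matrix whose rows
   are the coordinates of w_{i_1}, ..., w_{i_k}. *)
Definition wedge (K : fieldType) (W : vectType K) (m : nat)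
    (w : 'I_m -> W) (I : {set 'I_m}) : ExtAlg W :=
  [ffun S => minor (\matrix_(k < #|I|) coords (w (enum_val k))) S].

From HB Require Import structures.
From mathcomp Require Import all_boot all_order all_algebra all_fingroup.
Set Implicit Arguments. Unset Strict Implicit. Unset Printing Implicit Defensive.
Import GRing.Theory.
Local Open Scope ring_scope.

(* Induction on n, inside any index set A having at least n elements in J1 and n outside.
   With j in A chosen in J1 or not according to the parity of r, the family
   F(n+1, r+1) := {j ∪ X | X ∈ F(n, r)} ∪ F(n, r+1), both built inside A \ {j}, has the
   right size (Pascal's rule) and the right intersection with J1.
   Write the w_i as the rows of a matrix M, so that w_X is the vector of maximal minors of
   the rows X.  Pivoting M on a nonzero entry (j, k) gives an n-column matrix M' whose rows
   other than j are still in general position.  Row j of M' vanishes, the minors of M' are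
   linear combinations of those of M (Cauchy-Binet), and the minor of M on rows j ∪ X and
   columns k ∪ S is M_jk times the minor of M' on X, S, up to signs depending only on X and
   on S.  So a linear relation among the w_X, X ∈ F(n+1, r+1), first gives one among
   F(n, r+1) for M', which is trivial, and then one among F(n, r) for M'. *)

Section Enumerations.
Variable T : finType.

Definition cast_enum (S : {set T}) p (e : #|S| = p) (k : 'I_p) : T :=
  enum_val (cast_ord (esym e) k).

Lemma cast_enum_inj (S : {set T}) p (e : #|S| = p) : injective (cast_enum e).
Proof. by move=> x y /enum_val_inj/cast_ord_inj. Qed.

Lemma imset_cast_enum (S : {set T}) p (e : #|S| = p) :
  [set cast_enum e k | k in 'I_p] = S.
Proof.
apply/setP=> x; apply/imsetP/idP => [[k _ ->]|xS]; first exact: enum_valP.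
by exists (cast_ord e (enum_rank_in xS x)); rewrite // /cast_enum cast_ordK enum_rankK_in.
Qed.

Lemma same_image_perm p (f g : 'I_p -> T) : injective g ->
  [set f i | i in 'I_p] = [set g i | i in 'I_p] -> exists s : 'S_p, g =1 f \o s.
Proof.
move=> g_inj fg.
have /fin_all_exists[s0 fs0] : forall i, exists j, f j = g i.
  move=> i; have : g i \in [set f i | i in 'I_p] by rewrite fg imset_f.
  by case/imsetP=> j _ ->; exists j.
have s0_inj : injective s0 by move=> i i' /(congr1 f); rewrite !fs0 => /g_inj.
by exists (perm s0_inj) => i; rewrite /= permE fs0.
Qed.

Definition ord_cons p (y : T) (h : 'I_p -> T) (i : 'I_p.+1) : T :=
  if unlift ord0 i is Some a then h a else y.

Lemma ord_cons0 p y (h : 'I_p -> T) : ord_cons y h ord0 = y.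
Proof. by rewrite /ord_cons unlift_none. Qed.

Lemma ord_consS p y (h : 'I_p -> T) a : ord_cons y h (lift ord0 a) = h a.
Proof. by rewrite /ord_cons liftK. Qed.

Lemma imset_ord_cons p y (h : 'I_p -> T) :
  [set ord_cons y h i | i in 'I_p.+1] = y |: [set h a | a in 'I_p].
Proof.
apply/setP=> x; rewrite in_setU1; apply/imsetP/orP => [[i _ ->]|].
  by rewrite /ord_cons; case: unliftP => [a _|_]; [right; rewrite imset_f | left].
case=> [/eqP ->|/imsetP[a _ ->]]; first by exists ord0; rewrite ?ord_cons0.
by exists (lift ord0 a); rewrite ?ord_consS.
Qed.

Lemma ord_cons_inj p y (h : 'I_p -> T) : injective h ->
  y \notin [set h a | a in 'I_p] -> injective (ord_cons y h).
Proof.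
move=> h_inj yNh x z; rewrite /ord_cons.
case: unliftP => [a ->|->]; case: unliftP => [b ->|->] //.
- by move/h_inj->.
- by move=> e; case/negP: yNh; rewrite -e imset_f.
- by move=> e; case/negP: yNh; rewrite e imset_f.
Qed.

End Enumerations.
Arguments cast_enum_inj {T S p e}.

Lemma nth_map_enum (I : finType) (V : nmodType) (F : {set I}) (v : I -> V) (i : 'I_#|F|) :
  [seq v X | X <- enum F]`_i = v (enum_val i).
Proof.
have iF : (i < size (enum F))%N by rewrite -cardE ltn_ord.
by rewrite (nth_map (enum_val i)) // (set_nth_default (enum_default i)).
Qed.

Lemma notin_imset_lift n (k : 'I_n.+1) (S : {set 'I_n}) : k \notin [set lift k t | t in S].
Proof. by apply/imsetP=> -[t _ /eqP]; rewrite (negbTE (neq_lift k t)). Qed.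

Lemma card_setU1_lift n (k : 'I_n.+1) (S : {set 'I_n}) :
  #|k |: [set lift k t | t in S]| = #|S|.+1.
Proof. by rewrite cardsU1 notin_imset_lift card_imset //; apply: lift_inj. Qed.

Lemma exists_subset_card (T : finType) (B : {set T}) p : (p <= #|B|)%N ->
  exists2 S : {set T}, S \subset B & #|S| = p.
Proof.
move=> pB; exists [set x in take p (enum B)].
  by apply/subsetP=> x; rewrite inE => /mem_take; rewrite mem_enum.
rewrite cardsE (card_uniqP _) ?take_uniq ?enum_uniq // size_take -cardE.
by case: ltnP => // Bp; apply/eqP; rewrite eqn_leq Bp pB.
Qed.

Lemma setU1_imset_lift n (k : 'I_n.+1) : k |: [set lift k t | t in [set: 'I_n]] = setT.
Proof.
apply/setP=> x; rewrite !inE; case: (unliftP k x) => [t ->|->]; last by rewrite eqxx.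
by rewrite imset_f ?orbT.
Qed.

Lemma leq_cardsD1 (T : finType) (B : {set T}) (j : T) n : (n < #|B|)%N -> (n <= #|B :\ j|)%N.
Proof. by rewrite (cardsD1 j B); case: (_ \in _) => // /ltnW. Qed.

Lemma card_setU1I (T : finType) (j : T) (Y B : {set T}) : j \notin Y ->
  #|(j |: Y) :&: B| = ((j \in B) + #|Y :&: B|)%N.
Proof.
move=> jY; rewrite setIUl; have [jB|jB] := boolP (j \in B).
  by rewrite (setIidPl _) ?sub1set // -/(j |: _) cardsU1 inE (negbTE jY).
by rewrite (_ : [set j] :&: B = set0) ?set0U //; apply/setP=> x; rewrite !inE;
  case: eqP => // ->; rewrite (negbTE jB).
Qed.

Lemma setU1_inj_in (T : finType) (j : T) (F : {set {set T}}) :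
  {in F, forall X : {set T}, j \notin X} -> {in F &, injective (fun X => j |: X)}.
Proof.
move=> jF X Y XF YF /= eqXY.
by rewrite -(setU1K (jF X XF)) -(setU1K (jF Y YF)) eqXY.
Qed.

Lemma disjoint_setU1_imset (T : finType) (j : T) (F1 F2 : {set {set T}}) :
  {in F2, forall X : {set T}, j \notin X} -> [disjoint [set j |: X | X in F1] & F2].
Proof.
move=> jF2; rewrite -setI_eq0; apply/eqP/setP=> X; rewrite !inE.
by apply/negbTE/andP=> -[/imsetP[Y _ ->] /jF2]; rewrite setU11.
Qed.

Section Minors.
Variable K : fieldType.
Implicit Types (p n : nat).

Lemma minorE p n (A : 'M[K]_(p, n)) (S : {set 'I_n}) (e : #|S| = p) :
  minor A S = \det (colsub (cast_enum e) A).
Proof. by rewrite /minor; case: eqP => // e'; rewrite (eq_irrelevance e e'). Qed.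

Lemma minor_card_neq p n (A : 'M[K]_(p, n)) (S : {set 'I_n}) : #|S| != p -> minor A S = 0.
Proof. by rewrite /minor; case: eqP. Qed.

Lemma minor_mulmxl p n (P : 'M[K]_p) (B : 'M[K]_(p, n)) (S : {set 'I_n}) :
  minor (P *m B) S = \det P * minor B S.
Proof.
rewrite /minor; case: eqP => [e|]; last by rewrite mulr0.
by rewrite -mulmx_colsub det_mulmx.
Qed.

Lemma minor_colsub_perm p n (g : 'I_p -> 'I_n) : injective g ->
  exists s : 'S_p, forall A : 'M[K]_(p, n),
    minor A [set g i | i in 'I_p] = (-1) ^+ s * \det (colsub g A).
Proof.
move=> g_inj; have e : #|[set g i | i in 'I_p]| = p by rewrite card_imset ?card_ord.
have [s gE] := same_image_perm g_inj (imset_cast_enum e).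
exists s => A; have -> : colsub g A = col_perm s (colsub (cast_enum e) A).
  by apply/matrixP=> i j; rewrite !mxE gE.
rewrite (minorE _ e) col_permE.
by rewrite det_mulmx det_perm odd_permV mulrCA -signr_addb addbb mulr1.
Qed.

Lemma det_colsub_noninj p n (g : 'I_p -> 'I_n) (A : 'M[K]_(p, n)) :
  ~~ injectiveb g -> \det (colsub g A) = 0.
Proof.
case/injectivePn=> i [i' neq_ii' g_ii']; rewrite -det_tr.
by apply: (determinant_alternate neq_ii') => c; rewrite !mxE g_ii'.
Qed.

Lemma det_mulmx_expand p n (B : 'M[K]_(p, n)) (C : 'M[K]_(n, p)) :
  \det (B *m C) = \sum_(f : {ffun 'I_p -> 'I_n}) \det (colsub f B) * \prod_i C (f i) i.
Proof.
rewrite -det_tr; under [RHS]eq_bigr do rewrite -det_tr.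
rewrite /determinant; transitivity (\sum_(s : 'S_p) \sum_(f : {ffun 'I_p -> 'I_n})
    (-1) ^+ s * \prod_i (B (s i) (f i) * C (f i) i)).
  apply: eq_bigr => s _; rewrite -big_distrr /=; congr (_ * _).
  rewrite -(bigA_distr_bigA (fun i c => B (s i) c * C c i)) /=.
  by apply: eq_bigr => i _; rewrite !mxE.
rewrite exchange_big /=; apply: eq_bigr => f _; rewrite big_distrl /=.
apply: eq_bigr => s _; rewrite big_split /= mulrA.
by congr (_ * _ * _); apply: eq_bigr => i _; rewrite !mxE.
Qed.

Lemma minor_mulmxr n q (C : 'M[K]_(n, q)) (S : {set 'I_q}) :
  exists coef : {set 'I_n} -> K, forall p (B : 'M[K]_(p, n)),
    minor (B *m C) S = \sum_T coef T * minor B T.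
Proof.
pose g := cast_enum (erefl #|S|).
have /fin_all_exists[sgn sgnE] : forall f : {ffun 'I_#|S| -> 'I_n}, exists e : K,
    injectiveb f -> forall B, \det (colsub f B) = e * minor B [set f i | i in 'I_#|S|].
  move=> f; case: (boolP (injectiveb f)) => [/injectiveP f_inj|]; last by exists 0.
  have [s sE] := minor_colsub_perm f_inj.
  by exists ((-1) ^+ s) => _ B; rewrite sE mulrA -expr2 sqrr_sign mul1r.
exists (fun T => \sum_(f : {ffun 'I_#|S| -> 'I_n} | injectiveb f && ([set f i | i in 'I_#|S|] == T))
                   sgn f * \prod_i C (f i) (g i)) => p B.
have [e|neq] := #|S| =P p; last first.
  rewrite minor_card_neq; last by apply/eqP.
  rewrite big1 // => T _; rewrite big_distrl big1 // => f /andP[/injectiveP f_inj /eqP <-].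
  by rewrite /= minor_card_neq ?mulr0 // card_imset // card_ord; apply/eqP.
case: p / e in B *.
rewrite (minorE _ (erefl #|S|)) -/g -mulmx_colsub det_mulmx_expand.
rewrite [LHS](bigID (fun f : {ffun 'I_#|S| -> 'I_n} => injectiveb f)) /=.
rewrite [X in _ + X]big1 ?addr0; last by move=> f /det_colsub_noninj ->; rewrite mul0r.
rewrite (partition_big (fun f : {ffun 'I_#|S| -> 'I_n} => [set f i | i in 'I_#|S|]) predT) //=.
apply: eq_bigr => T _; rewrite big_distrl /=; apply: eq_bigr => f /andP[f_inj /eqP <-].
rewrite sgnE // mulrAC; congr (_ * _ * _); apply: eq_bigr => i _; exact: mxE.
Qed.

End Minors.

Section RowMinors.
Variable K : fieldType.
Implicit Types (m n p : nat).

Definition mxminor m n (M : 'M[K]_(m, n)) (X : {set 'I_m}) (S : {set 'I_n}) : K :=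
  minor (rowsub (fun k : 'I_#|X| => enum_val k) M) S.

Lemma mxminorE m n (M : 'M[K]_(m, n)) (X : {set 'I_m}) p (e : #|X| = p)
    (S : {set 'I_n}) :
  mxminor M X S = minor (rowsub (cast_enum e) M) S.
Proof.
by case: p / e; congr minor; apply/matrixP=> i c; rewrite !mxE /cast_enum cast_ord_id.
Qed.

Lemma mxminor_card_neq m n (M : 'M[K]_(m, n)) (X : {set 'I_m}) (S : {set 'I_n}) :
  #|S| != #|X| -> mxminor M X S = 0.
Proof. exact: minor_card_neq. Qed.

Lemma mxminor0 m n (M : 'M[K]_(m, n)) : mxminor M set0 set0 = 1.
Proof.
have e : #|(set0 : {set 'I_n})| = #|(set0 : {set 'I_m})| by rewrite !cards0.
rewrite /mxminor (minorE _ e).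
by move: (colsub _ _); rewrite cards0 => A; apply: det_mx00.
Qed.

Lemma mxminor_row0 m n (M : 'M[K]_(m, n)) (X : {set 'I_m}) (S : {set 'I_n}) j :
  j \in X -> row j M = 0 -> mxminor M X S = 0.
Proof.
move=> jX Mj0; rewrite /mxminor /minor; case: eqP => // e.
rewrite (expand_det_row _ (enum_rank_in jX j)) big1 // => c _.
have /rowP/(_ (cast_enum e c)) := Mj0.
by rewrite !mxE enum_rankK_in // => ->; rewrite mul0r.
Qed.

Lemma mxminor_rowsub_perm m p (f : 'I_p -> 'I_m) : injective f ->
  exists s : 'S_p, forall n (N : 'M[K]_(m, n)) T,
    mxminor N [set f i | i in 'I_p] T = (-1) ^+ s * minor (rowsub f N) T.
Proof.
move=> f_inj; have e : #|[set f i | i in 'I_p]| = p by rewrite card_imset ?card_ord.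
have [s fE] := same_image_perm f_inj (imset_cast_enum e).
exists s => n N T; have -> : rowsub f N = row_perm s (rowsub (cast_enum e) N).
  by apply/matrixP=> i c; rewrite !mxE fE.
by rewrite (mxminorE _ e) row_permE minor_mulmxl det_perm mulrA -expr2 sqrr_sign mul1r.
Qed.

Lemma mxminor_mulmxr n q (C : 'M[K]_(n, q)) (S : {set 'I_q}) :
  exists coef : {set 'I_n} -> K, forall m (M : 'M[K]_(m, n)) X,
    mxminor (M *m C) X S = \sum_T coef T * mxminor M X T.
Proof.
have [coef coefE] := minor_mulmxr C S.
by exists coef => m M X; rewrite /mxminor -mul_rowsub_mx coefE.
Qed.

End RowMinors.

Section Pivot.
Variable K : fieldType.
Implicit Types (m n p : nat).

Lemma det_pivot p (A : 'M[K]_(1 + p)) : A 0 0 != 0 ->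
  \det A = A 0 0 * \det (drsubmx A - (A 0 0)^-1 *: (dlsubmx A *m ursubmx A)).
Proof.
move=> nzA; set a := A 0 0.
have ulA : ulsubmx A = a%:M by rewrite [ulsubmx A]mx11_scalar !mxE lshift0.
pose L : 'M[K]_(1 + p) := block_mx 1%:M 0 (- a^-1 *: dlsubmx A) 1%:M.
have LA : L *m A = block_mx a%:M (ursubmx A) 0
                     (drsubmx A - a^-1 *: (dlsubmx A *m ursubmx A)).
  rewrite -{1}[A]submxK mulmx_block !mul1mx !mul0mx !addr0 ulA mul_mx_scalar.
  by rewrite scalerA mulrN mulfV // scaleN1r addNr -scalemxAl scaleNr addrC.
have := congr1 determinant LA.
by rewrite det_mulmx det_lblock !det1 !mul1r det_ublock det_scalar1.
Qed.

Definition pivot_mx m n (M : 'M[K]_(m, n.+1)) (j : 'I_m) (k : 'I_n.+1) : 'M[K]_(m, n) :=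
  \matrix_(i, t) (M i (lift k t) - M i k / M j k * M j (lift k t)).

Lemma pivot_mxE m n (M : 'M[K]_(m, n.+1)) j k :
  pivot_mx M j k = M *m (colsub (lift k) 1%:M
                         - (M j k)^-1 *: (delta_mx k 0 *m colsub (lift k) (row j M))).
Proof.
rewrite mulmxBr mulmx_colsub mulmx1 -scalemxAr mulmxA -colE.
by apply/matrixP=> i t; rewrite !mxE big_ord1 !mxE mulrAC mulrC.
Qed.

Lemma mxminor_pivot_lin m n (M : 'M[K]_(m, n.+1)) j k (S : {set 'I_n}) :
  exists coef : {set 'I_n.+1} -> K,
    forall X, mxminor (pivot_mx M j k) X S = \sum_T coef T * mxminor M X T.
Proof.
have [coef coefE] := mxminor_mulmxr (colsub (lift k) 1%:M
  - (M j k)^-1 *: (delta_mx k 0 *m colsub (lift k) (row j M))) S.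
by exists coef => X; rewrite pivot_mxE coefE.
Qed.

Lemma pivot_mx_row0 m n (M : 'M[K]_(m, n.+1)) j k :
  M j k != 0 -> row j (pivot_mx M j k) = 0.
Proof. by move=> nz; apply/rowP=> t; rewrite !mxE divff // mul1r subrr. Qed.

Lemma mxminor_setU1_sign m (j : 'I_m) (X : {set 'I_m}) : j \notin X ->
  exists2 r : K, r != 0 & forall n (M : 'M[K]_(m, n)) T,
    mxminor M (j |: X) T = r * minor (rowsub (ord_cons j (cast_enum (erefl #|X|))) M) T.
Proof.
move=> jX; have img : [set ord_cons j (cast_enum (erefl #|X|)) i | i in 'I_#|X|.+1] = j |: X.
  by rewrite imset_ord_cons imset_cast_enum.
have f_inj : injective (ord_cons j (cast_enum (erefl #|X|))).
  by apply: ord_cons_inj; rewrite ?imset_cast_enum //; apply: cast_enum_inj.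
have [s sE] := mxminor_rowsub_perm K f_inj.
by exists ((-1) ^+ s); rewrite ?signr_eq0 // => n M T; rewrite -img sE.
Qed.

Lemma minor_setU1_lift_sign n (k : 'I_n.+1) (S : {set 'I_n}) :
  exists2 r : K, r != 0 & forall p (e : #|S| = p) (A : 'M[K]_(p.+1, n.+1)),
    minor A (k |: [set lift k t | t in S])
    = r * \det (colsub (ord_cons k (lift k \o cast_enum e)) A).
Proof.
have img : [set ord_cons k (lift k \o cast_enum (erefl #|S|)) i | i in 'I_#|S|.+1]
           = k |: [set lift k t | t in S].
  by rewrite imset_ord_cons (imset_comp (lift k)) imset_cast_enum.
have g_inj : injective (ord_cons k (lift k \o cast_enum (erefl #|S|))).
  apply: ord_cons_inj; first exact: inj_comp (@lift_inj _ k) cast_enum_inj.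
  by rewrite (imset_comp (lift k)) imset_cast_enum notin_imset_lift.
have [s sE] := minor_colsub_perm K g_inj.
by exists ((-1) ^+ s); rewrite ?signr_eq0 // => p e; case: p / e => A; rewrite -img sE.
Qed.

Lemma mxminor_setU1_pivot m n (M : 'M[K]_(m, n.+1)) j k : M j k != 0 ->
  exists rho : {set 'I_m} -> K, exists sig : {set 'I_n} -> K,
  [/\ forall X, rho X != 0, forall S, sig S != 0 &
      forall (X : {set 'I_m}) (S : {set 'I_n}), j \notin X ->
        mxminor M (j |: X) (k |: [set lift k t | t in S])
        = rho X * sig S * M j k * mxminor (pivot_mx M j k) X S].
Proof.
move=> nzM.
have /fin_all_exists[rho rhoE] : forall X : {set 'I_m}, exists r : K, r != 0 /\ (j \notin X ->
    forall T, mxminor M (j |: X) T = r * minor (rowsub (ord_cons j (cast_enum (erefl #|X|))) M) T).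
  move=> X; have [jX|/mxminor_setU1_sign[r nz_r rE]] := boolP (j \in X).
    by exists 1; rewrite oner_neq0.
  by exists r; split=> // _; apply: rE.
have /fin_all_exists2[sig nz_sig sigE] := minor_setU1_lift_sign k.
exists rho, sig; split=> [X|//|X S jX]; first exact: (rhoE X).1.
have [e|ne] := #|S| =P #|X|; last first.
  rewrite (mxminor_card_neq (pivot_mx M j k)) ?mulr0; last exact/eqP.
  by rewrite mxminor_card_neq // card_setU1_lift cardsU1 jX eqSS; apply/eqP.
rewrite (rhoE X).2 // (sigE S _ e).
set A := colsub _ _; have A00 : A 0 0 = M j k by rewrite !mxE !ord_cons0.
rewrite (@det_pivot #|X| A) A00 // !mulrA (mxminorE _ (erefl #|X|)) (minorE _ e).
congr (_ * \det _); apply/matrixP=> a b; rewrite !mxE big_ord1 !mxE !rshift1.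
have -> : lshift #|X| (ord0 : 'I_1) = ord0 :> 'I_#|X|.+1 by apply: val_inj.
by rewrite !ord_cons0 !ord_consS /= mulrCA mulrA.
Qed.

End Pivot.

Section Independence.
Variable K : fieldType.
Implicit Types (m n : nat).

Definition gen_pos m n (A : {set 'I_m}) (M : 'M[K]_(m, n)) :=
  forall S : {set 'I_m}, S \subset A -> #|S| = n -> mxminor M S setT != 0.

Definition mxminor_free m n (M : 'M[K]_(m, n)) (F : {set {set 'I_m}}) :=
  forall c : {set 'I_m} -> K, (forall S, \sum_(X in F) c X * mxminor M X S = 0) ->
  {in F, forall X, c X = 0}.

Lemma gen_pos_pivot m n (A : {set 'I_m}) (M : 'M[K]_(m, n.+1)) j k :
  gen_pos A M -> j \in A -> M j k != 0 -> gen_pos (A :\ j) (pivot_mx M j k).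
Proof.
move=> gpM jA nzM S /subsetD1P[SA jS] cardS.
have [rho [sig [_ _ pivE]]] := mxminor_setU1_pivot nzM.
have := gpM (j |: S); rewrite subUset sub1set jA SA cardsU1 jS cardS => /(_ isT erefl).
by rewrite -(setU1_imset_lift k) pivE //; apply: contraNneq => ->; rewrite mulr0.
Qed.

Lemma gen_pos_row_neq0 m n (A : {set 'I_m}) (M : 'M[K]_(m, n.+1)) j :
  gen_pos A M -> j \in A -> (n <= #|A :\ j|)%N -> exists k, M j k != 0.
Proof.
move=> gpM jA /exists_subset_card[S /subsetD1P[SA jS] cardS].
have [k nzM|Mj0] := pickP (fun k => M j k != 0); first by exists k.
have := gpM (j |: S); rewrite subUset sub1set jA SA cardsU1 jS cardS => /(_ isT erefl).
rewrite (mxminor_row0 _ (setU11 j S)) ?eqxx //.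
by apply/rowP=> k; rewrite !mxE; apply/eqP; rewrite -[_ == _]negbK Mj0.
Qed.

Lemma mxminor_free_setU1 m n (M : 'M[K]_(m, n.+1)) j k (F1 F2 : {set {set 'I_m}}) :
    M j k != 0 ->
    {in F1, forall X : {set 'I_m}, j \notin X} -> {in F2, forall X : {set 'I_m}, j \notin X} ->
    mxminor_free (pivot_mx M j k) F1 -> mxminor_free (pivot_mx M j k) F2 ->
  mxminor_free M ([set j |: X | X in F1] :|: F2).
Proof.
move=> nzM jF1 jF2 free1 free2 c rel; set M' := pivot_mx M j k.
have sumU (G : {set 'I_m} -> K) : \sum_(X in [set j |: X | X in F1] :|: F2) G X
    = \sum_(Y in F1) G (j |: Y) + \sum_(X in F2) G X.
  rewrite -(big_imset _ (setU1_inj_in jF1)) -bigU ?disjoint_setU1_imset //=.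
  by apply: eq_bigl => X; rewrite !inE.
have c2 : {in F2, forall X, c X = 0}.
  apply: free2 => S; have [coef coefE] := mxminor_pivot_lin M j k S.
  transitivity (\sum_(X in [set j |: X | X in F1] :|: F2) c X * mxminor M' X S).
    rewrite sumU [X in _ = X + _]big1 ?add0r // => Y _.
    by rewrite (mxminor_row0 _ (setU11 j Y)) ?mulr0 ?pivot_mx_row0.
  under eq_bigr => X _ do rewrite coefE mulr_sumr.
  rewrite exchange_big big1 //= => T _.
  by under eq_bigr => X _ do rewrite mulrCA; rewrite -mulr_sumr rel mulr0.
have [rho [sig [nz_rho nz_sig pivE]]] := mxminor_setU1_pivot nzM.
have c1 : {in F1, forall Y, c (j |: Y) * rho Y = 0}.
  apply: free1 => S; apply/(mulIf (mulf_neq0 (nz_sig S) nzM)); rewrite mul0r.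
  rewrite -[RHS](rel (k |: [set lift k t | t in S])) sumU [X in _ = _ + X]big1; last first.
    by move=> X XF2; rewrite c2 ?mul0r.
  rewrite addr0.
  rewrite mulr_suml; apply: eq_bigr => Y YF1; rewrite pivE ?jF1 //.
  by rewrite -!mulrA; congr (_ * (_ * _)); rewrite mulrC -!mulrA.
move=> X /setUP[/imsetP[Y YF1 ->]|]; last exact: c2.
by have /eqP := c1 Y YF1; rewrite mulf_eq0 (negbTE (nz_rho Y)) orbF => /eqP.
Qed.

End Independence.

Section GoodFamilies.
Variables (m : nat) (J1 : {set 'I_m}).
Implicit Types (A : {set 'I_m}) (F : {set {set 'I_m}}).

Definition good_family (A : {set 'I_m}) n r (F : {set {set 'I_m}}) :=
  [/\ #|F| = 'C(n, r),
      {in F, forall X : {set 'I_m}, [/\ X \subset A, #|X| = r & #|X :&: J1| = r./2]} &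
      forall (K : fieldType) (M : 'M[K]_(m, n)), gen_pos A M -> mxminor_free M F].

Lemma good_family_r0 A n : good_family A n 0 [set set0].
Proof.
split=> [|X /set1P->|K M _ c rel X /set1P->]; first by rewrite cards1 bin0.
  by rewrite sub0set set0I cards0.
by have := rel set0; rewrite big_set1 mxminor0 mulr1.
Qed.

Lemma good_family_gtn A n r : (n < r)%N -> good_family A n r set0.
Proof. by move=> ltnr; split=> [|X|K M _ c _ X]; rewrite ?cards0 ?bin_small ?inE. Qed.

Lemma good_family_step A n r j (F1 F2 : {set {set 'I_m}}) :
    j \in A -> (j \in J1) = odd r -> (n <= #|A :\ j|)%N ->
    good_family (A :\ j) n r F1 -> good_family (A :\ j) n r.+1 F2 ->
  good_family A n.+1 r.+1 ([set j |: X | X in F1] :|: F2).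
Proof.
move=> jA jJ1 nA [cF1 memF1 freeF1] [cF2 memF2 freeF2].
have jF1 X : X \in F1 -> j \notin X by case/memF1=> /subsetD1P[].
have jF2 X : X \in F2 -> j \notin X by case/memF2=> /subsetD1P[].
split.
- have /eqP F12 : [set j |: X | X in F1] :&: F2 == set0.
    by rewrite setI_eq0 disjoint_setU1_imset.
  by rewrite cardsU F12 cards0 subn0 card_in_imset ?cF1 ?cF2 ?binS 1?addnC //; apply: setU1_inj_in.
- move=> X /setUP[/imsetP[Y YF1 ->]|XF2].
    have [/subsetD1P[YA _] cardY cardYJ] := memF1 Y YF1.
    rewrite subUset sub1set jA YA cardsU1 jF1 // cardY card_setU1I ?jF1 //.
    by rewrite cardYJ jJ1 -uphalf_half uphalfE.
  by have [/subsetD1P[XA _] ? ?] := memF2 X XF2.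
- move=> K M gpM; have [k nzM] := gen_pos_row_neq0 gpM jA nA.
  have gpM' := gen_pos_pivot gpM jA nzM.
  exact: mxminor_free_setU1 nzM jF1 jF2 (freeF1 _ _ gpM') (freeF2 _ _ gpM').
Qed.

(* No bound on r is needed: for r > n the empty family is good, which is what the
   inductive step uses when r = n. *)
Lemma exists_good_family n r A : (n <= #|A :&: J1|)%N -> (n <= #|A :\: J1|)%N ->
  exists F, good_family A n r F.
Proof.
elim: n r A => [|n IH] [|r] A nJ1 nJ2.
- by exists [set set0]; apply: good_family_r0.
- by exists set0; apply: good_family_gtn.
- by exists [set set0]; apply: good_family_r0.
have [j jA jJ1] : exists2 j, j \in A & (j \in J1) = odd r.
  have [odd_r|even_r] := boolP (odd r).
    have /set0Pn[j] : A :&: J1 != set0 by rewrite -card_gt0 (leq_trans _ nJ1).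
    by rewrite inE => /andP[jA jJ1]; exists j; rewrite ?jJ1.
  have /set0Pn[j] : A :\: J1 != set0 by rewrite -card_gt0 (leq_trans _ nJ2).
  by rewrite inE => /andP[jNJ1 jA]; exists j; rewrite ?(negbTE jNJ1) ?(negbTE even_r).
have nJ1' : (n <= #|(A :\ j) :&: J1|)%N by rewrite setIDAC leq_cardsD1.
have nJ2' : (n <= #|(A :\ j) :\: J1|)%N by rewrite setDDl setUC -setDDl leq_cardsD1.
have [F1 goodF1] := IH r _ nJ1' nJ2'.
have [F2 goodF2] := IH r.+1 _ nJ1' nJ2'.
exists ([set j |: X | X in F1] :|: F2); apply: good_family_step => //.
by rewrite (leq_trans nJ1') // subset_leq_card // subsetIl.
Qed.

End GoodFamilies.

Section ExteriorPower.
Variables (K : fieldType) (W : vectType K).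
Local Notation d := (\dim (fullv : {vspace W})).

Definition coords_mx m (w : 'I_m -> W) : 'M[K]_(m, d) := \matrix_(i, c) coords (w i) 0 c.

Lemma wedgeE m (w : 'I_m -> W) X : wedge w X = [ffun S => mxminor (coords_mx w) X S].
Proof. by apply/ffunP=> S; rewrite !ffunE; congr minor; apply/matrixP=> i c; rewrite !mxE. Qed.

Lemma gen_pos_coords m (w : 'I_m -> W) :
    (forall S : {set 'I_m}, #|S| = d -> basis_of fullv [seq w i | i <- enum S]) ->
  gen_pos setT (coords_mx w).
Proof.
move=> w_basis S _ cardS; have e : #|[set: 'I_d]| = #|S| by rewrite cardsT card_ord.
rewrite /mxminor (minorE _ e); apply/det0P=> -[v nz_v vM].
have w_free : free (map_tuple w (enum_tuple S)) := basis_free (w_basis S cardS).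
move/freeP/(_ (fun i => v 0 i)): w_free => w_free.
case/eqP: nz_v; apply/rowP=> i; rewrite mxE; apply: w_free => {i}.
under eq_bigr => i _ do rewrite nth_map_enum.
set u := \sum_i _; rewrite (coord_vbasis (memvf u)) big1 // => c _.
have /imsetP[i _ ->] : c \in [set cast_enum e i | i in 'I_#|S|] by rewrite imset_cast_enum inE.
have /rowP/(_ i) := vM; rewrite !mxE => vMi.
rewrite -[X in X *: _](_ : 0 = _) ?scale0r // -vMi linear_sum; apply: eq_bigr => i' _.
by rewrite linearZ !mxE.
Qed.

Lemma ffun_free (I T : finType) (F : {set I}) (v : I -> {ffun T -> K^o}) :
    (forall c : I -> K, (forall t, \sum_(X in F) c X * v X t = 0) -> {in F, forall X, c X = 0}) ->
  free [seq v X | X <- enum F].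
Proof.
move=> v_free; suff: free (map_tuple v (enum_tuple F)) by [].
apply/freeP=> k sum0 i.
pose c X := \sum_(j < #|F| | enum_val j == X) k j.
have cE j : c (enum_val j) = k j.
  by rewrite /c (big_pred1 j) // => j'; rewrite /= (inj_eq enum_val_inj).
rewrite -cE; apply: v_free (enum_valP i) => t; rewrite big_enum_val.
have /ffunP/(_ t) := sum0; rewrite sum_ffunE ffunE => sumE; rewrite -[RHS]sumE.
by apply: eq_bigr => j _; rewrite cE ffunE nth_map_enum.
Qed.

Lemma memv_ExtPow r (u : ExtAlg W) :
  (forall S : {set 'I_d}, #|S| != r -> u S = 0) -> u \in ExtPow W r.
Proof.
move=> u0; have -> : u = \sum_(T in [set T : {set 'I_d} | #|T| == r]) u T *: ext_basis_vec T.
  apply/ffunP=> S; rewrite sum_ffunE.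
  have [cardS|nS] := eqVneq #|S| r.
    rewrite (bigD1 S) ?inE ?cardS //= big1 => [|T /andP[_ TS]]; rewrite !ffunE.
      by rewrite eqxx addr0; apply: (esym (mulr1 _)).
    by rewrite eq_sym in TS; rewrite (negbTE TS); apply: mulr0.
  rewrite u0 // big1 // => T; rewrite inE !ffunE => /eqP cardT.
  have -> : (S == T) = false by apply: contraNF nS => /eqP ->; apply/eqP.
  exact: mulr0.
apply: memv_suml => T rT; apply: memvZ; apply: memv_span; apply/mapP.
by exists T; rewrite ?mem_enum.
Qed.

Lemma dim_ExtPow r : (\dim (ExtPow W r) <= 'C(d, r))%N.
Proof. by rewrite (leq_trans (dim_span _)) // size_map -cardE card_draws card_ord. Qed.

End ExteriorPower.

Theorem lemma4p12 (a b n r : nat) (hn : (1 <= n)%N) (ha : (n <= a)%N)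
    (hb : (n <= b)%N) (hr1 : (1 <= r)%N) (hrn : (r <= n)%N)
    (J1 : {set 'I_(a + b)}) (hJ1 : #|J1| = a) :
  exists F : {set {set 'I_(a + b)}},
    #|F| = 'C(n, r) /\
    (forall X, X \in F -> #|X| = r /\ #|X :&: J1| = r./2) /\
    (forall (K : fieldType) (W : vectType K) (w : 'I_(a + b) -> W),
        \dim (fullv : {vspace W}) = n ->
        (forall S : {set 'I_(a + b)}, #|S| = n ->
            basis_of fullv [seq w i | i <- enum S]) ->
        basis_of (ExtPow W r) [seq wedge w X | X <- enum F]).
Proof.
have nJ1 : (n <= #|setT :&: J1|)%N by rewrite setTI hJ1.
have nJ2 : (n <= #|setT :\: J1|)%N.
  by rewrite setTD; have := cardsC J1; rewrite card_ord hJ1 => /addnI->.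
have [F [cardF memF freeF]] := exists_good_family r nJ1 nJ2.
exists F; split=> //; split=> [X /memF[] //|K W w dimW w_basis]; subst n.
rewrite basisEfree size_map -cardE cardF dim_ExtPow andbT; apply/andP; split.
  rewrite (eq_map (@wedgeE _ _ _ w)); apply: ffun_free.
  move=> c rel; apply: (freeF _ _ (gen_pos_coords w_basis)) => S.
  by rewrite -[RHS](rel S); apply: eq_bigr => X _; rewrite ffunE.
apply/span_subvP=> _ /mapP[X XF ->]; rewrite mem_enum in XF.
have [_ cardX _] := memF X XF.
by rewrite wedgeE; apply: memv_ExtPow => S nS; rewrite ffunE mxminor_card_neq ?cardX.
Qed.
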